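(* Let $G_n$ be a random $d$-regular multigraph on $n$ vertices (configuration model), with $d$ fixed and independent of $n$. Assume the strong external infection regime $0<\kappa<\frac{1}{4(n-1)^2}$, $a>1-\frac{1}{n^\alpha}>1-\kappa>\frac12$ for some $\alpha>1$, and additionally $\lambda\le\frac{1}{dn^\alpha}$. Let $t^{(n)}_{\mathrm{mix}}(\epsilon)$ be the mixing time of the noisy SIS model run on the realized multigraph. Then for every fixed $\epsilon\in(0,1)$ there is a sequence $\delta_n\to0$ such that for every $\epsilon'>0$ and all $n$ large enough, $$\mathbf{P}\Big(\tfrac{n}{2}\log n\,(1-\delta_n)\le t^{(n)}_{\mathrm{mix}}(\epsilon)\le 2n\log n\,(1+\delta_n)\Big)\ge1-\epsilon',$$ where $\mathbf{P}$ is the law of the random multigraph.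
   Context: Configuration model for a random $d$-regular multigraph ($dn$ even): each of the $n$ vertices receives $d$ half-edges; the $dn$ half-edges are paired uniformly at random, each pair forming an edge; self-loops and multiple edges are allowed. The state space is $\Omega_n=\{0,1\}^{V_n}$. For $\sigma\in\Omega_n$, $x\in V_n$, let $n_{I,\sigma}(x)=\#\{e\in E_n: e=(x,y),\ x\ne y,\ \sigma_y=1\}$ (edges counted with multiplicity, self-loops excluded), and $\Delta^{(n)}_{\max}$ the maximal degree. Fix $a,\lambda,\kappa>0$ (may depend on $n$), put $p(\sigma,x)=a+\lambda\, n_{I,\sigma}(x)$. The noisy SIS model is the discrete-time Markov chain on $\Omega_n$ in which, at each step, a vertex $x$ is chosen uniformly at random and only its state may change: if $\sigma_x=0$ it becomes $1$ with probability $p(\sigma,x)$ and stays $0$ otherwise; if $\sigma_x=1$ it becomes $0$ with probability $\kappa$ and stays $1$ otherwise. It has unique stationary distribution $\mu^n_{a,\lambda,\kappa}$. With $\mu^n_{\eta_0,t}$ the law at time $t$ from $\eta_0$ and $d_{TV}$ total variation distance, $d^{(n)}(t)=\sup_{\eta_0}d_{TV}(\mu^n_{\eta_0,t},\mu^n_{a,\lambda,\kappa})$ and $t^{(n)}_{\mathrm{mix}}(\epsilon)=\inf\{t\ge0:d^{(n)}(t)\le\epsilon\}$. *)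

From HB Require Import structures.
From mathcomp Require Import all_boot all_order all_algebra.
From mathcomp Require Import all_classical all_reals all_analysis.
Set Implicit Arguments. Unset Strict Implicit. Unset Printing Implicit Defensive.
Import Order.TTheory GRing.Theory Num.Theory.
Local Open Scope ring_scope.

(* Configuration model: vertex set 'I_n; half-edges 'I_(d*n); half-edge h
   belongs to vertex h %/ d (so every vertex gets exactly d half-edges).
   A configuration is a perfect matching of the half-edges, encoded as a
   fixed-point-free involution. *)
Definition config (d n : nat) := {ffun 'I_(d * n) -> 'I_(d * n)}.

Definition is_pairing d n (m : config d n) : bool :=
  [forall h, (m (m h) == h) && (m h != h)].

Definition Pcfg (R : realType) d n (E : pred (config d n)) : R :=
  #|[set m : config d n | is_pairing m && E m]|%:R /
  #|[set m : config d n | is_pairing m]|%:R.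

Definition state n := {ffun 'I_n -> bool}.

(* n_{I,sigma}(x): edges (x,y), y <> x, sigma_y = 1, counted with multiplicity
   (each such edge corresponds to exactly one half-edge at x whose partner
   lies at y). Self-loops are excluded. *)
Definition nI d n (m : config d n) (s : state n) (x : 'I_n) : nat :=
  #|[set h : 'I_(d * n) | (((h : nat) %/ d)%N == x) &&
      [exists y : 'I_n, [&& (((m h : nat) %/ d)%N == y), y != x & s y]]]|.

Definition flip n (x : 'I_n) (s : state n) : state n :=
  [ffun y => if y == x then ~~ s x else s y].

Definition sis_kernel (R : realType) d n (m : config d n) (a lam kap : R)
    (s t : state n) : R :=
  (n%:R)^-1 * \sum_(x : 'I_n)
     (let r := if s x then kap else a + lam * (nI m s x)%:R in
      if t == s then 1 - r else if t == flip x s then r else 0).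

Fixpoint sis_law (R : realType) d n (m : config d n) (a lam kap : R)
    (s0 : state n) (k : nat) : state n -> R :=
  match k with
  | 0 => fun t => (t == s0)%:R
  | k'.+1 => fun t => \sum_(s : state n)
        sis_law m a lam kap s0 k' s * sis_kernel m a lam kap s t
  end.

Definition is_stationary (R : realType) d n (m : config d n) (a lam kap : R)
    (pi : {ffun state n -> R}) : Prop :=
  [/\ forall s, 0 <= pi s, \sum_(s : state n) pi s = 1 &
      forall t, \sum_(s : state n) pi s * sis_kernel m a lam kap s t = pi t].

Definition statdist (R : realType) d n (m : config d n) (a lam kap : R)
    : {ffun state n -> R} :=
  xget [ffun => 0] [set pi | is_stationary m a lam kap pi].

Definition dTV (R : realType) n (mu nu : state n -> R) : R :=
  2^-1 * \sum_(s : state n) `|mu s - nu s|.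

Definition dmax (R : realType) d n (m : config d n) (a lam kap : R) (k : nat) : R :=
  \big[Num.max/0]_(s0 : state n)
     dTV (sis_law m a lam kap s0 k) (statdist m a lam kap).

Definition tmix (R : realType) d n (m : config d n) (a lam kap eps : R) : R :=
  inf [set (k%:R : R) | k in [set k : nat | dmax m a lam kap k <= eps]].

From HB Require Import structures.
From mathcomp Require Import all_boot all_order all_algebra.
From mathcomp Require Import all_classical all_reals all_analysis.
From mathcomp Require Import ring lra.
Import Order.TTheory GRing.Theory Num.Theory.
Set Implicit Arguments. Unset Strict Implicit. Unset Printing Implicit Defensive.
Local Open Scope ring_scope.

(* With recovery probability kap < 1/(4(n-1)^2) and infection probability at least
   c = 1 - kap at every healthy vertex, the number W of healthy vertices satisfies the drift
   inequality E[W'] <= (1 - c/n) W + kap on every multigraph.  Hence after k steps the law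
   puts mass at least 1 - (1 - c/n)^k n - n kap/c on the all-infected state, and the
   stationary law puts mass at least 1 - n kap/c >= 1 - 1/log n there; both laws are then
   close, which happens for k ~ 2 n log n.  Conversely, from the all-healthy state the
   all-infected state is unreachable until every vertex has been picked, which has
   probability at most (1 - (1 - 1/n)^k)^n, small for k < (n/2) log n.  The bounds hold for
   every realization of the graph, so delta_n = 0 works. *)

Section MarkovChain.
Variables (R : realFieldType) (T : finType) (K : T -> T -> R).

Fixpoint law (s0 : T) (k : nat) : T -> R :=
  match k with
  | 0 => fun t => (t == s0)%:R
  | k'.+1 => fun t => \sum_s law s0 k' s * K s t
  end.

Lemma law0_expect s0 (f : T -> R) : \sum_t law s0 0 t * f t = f s0.
Proof.
rewrite /= (bigD1 s0) //= eqxx mul1r big1 ?addr0 // => t /negbTE ->.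
by rewrite mul0r.
Qed.

Lemma kernel_expect (mu f : T -> R) :
  \sum_t (\sum_s mu s * K s t) * f t = \sum_s mu s * \sum_t K s t * f t.
Proof.
under eq_bigr do rewrite mulr_suml.
rewrite exchange_big /=; apply: eq_bigr => s _; rewrite mulr_sumr.
by apply: eq_bigr => t _; rewrite mulrA.
Qed.

Lemma stationary_expect (pi f : T -> R) :
  (forall t, \sum_s pi s * K s t = pi t) ->
  \sum_t pi t * f t = \sum_s pi s * \sum_t K s t * f t.
Proof. by move=> pi_inv; rewrite -kernel_expect; apply: eq_bigr => t _; rewrite pi_inv. Qed.

Hypothesis K_ge0 : forall s t, 0 <= K s t.
Hypothesis K_sum1 : forall s, \sum_t K s t = 1.

Lemma law_ge0 s0 k t : 0 <= law s0 k t.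
Proof.
elim: k t => [|k IH] t /=; first by rewrite ler0n.
by apply: sumr_ge0 => s _; apply: mulr_ge0.
Qed.

Lemma law_sum1 s0 k : \sum_t law s0 k t = 1.
Proof.
elim: k => [|k IH]; first by have := law0_expect s0 (fun _ => 1); under eq_bigr do rewrite mulr1.
have := kernel_expect (law s0 k) (fun _ => 1); under eq_bigr do rewrite mulr1.
move=> /= ->; rewrite -[RHS]IH; apply: eq_bigr => s _.
by under eq_bigr do rewrite mulr1; rewrite K_sum1 mulr1.
Qed.

End MarkovChain.

Lemma stochastic_fixed_row (F : fieldType) N (A : 'M[F]_N) : (0 < N)%N ->
  (forall i, \sum_j A i j = 1) -> exists2 v : 'rV_N, v != 0 & v *m A = v.
Proof.
move=> N_gt0 A_sum1; pose B := 1%:M - A; pose o : 'cV[F]_N := const_mx 1.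
have Bo : B *m o = 0.
  apply/matrixP => i j; rewrite !mxE; under eq_bigr do rewrite !mxE mulr1.
  rewrite sumrB A_sum1 (bigD1 i) //= eqxx big1 ?addr0 ?subrr // => k /negbTE.
  by rewrite eq_sym => ->.
have o_neq0 : o != 0.
  by apply/eqP => /matrixP /(_ (Ordinal N_gt0) 0); rewrite !mxE => /eqP; rewrite oner_eq0.
have detB : \det B == 0.
  apply: contraTT o_neq0 => /negPf detB; rewrite negbK.
  have B_unit : B \in unitmx by rewrite unitmxE unitfE detB.
  by rewrite -(mulKmx B_unit o) Bo mulmx0.
have [v v_neq0 vB] := det0P detB.
by exists v => //; apply/eqP; rewrite eq_sym -subr_eq0 -{1}(mulmx1 v) -mulmxBr -/B vB.
Qed.

(* Triangle inequality gives [|v| <= |v| A] entrywise, and both sides have the same total mass. *)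
Lemma stochastic_fixed_row_norm (R : realFieldType) N (A : 'M[R]_N) (v : 'rV_N) :
  (forall i j, 0 <= A i j) -> (forall i, \sum_j A i j = 1) -> v *m A = v ->
  forall j, \sum_i `|v 0 i| * A i j = `|v 0 j|.
Proof.
move=> A_ge0 A_sum1 vA.
have le_j j : `|v 0 j| <= \sum_i `|v 0 i| * A i j.
  rewrite -{1}vA mxE; apply: le_trans (ler_norm_sum _ _ _) _.
  by apply: ler_sum => i _; rewrite normrM (ger0_norm (A_ge0 i j)).
have gap0 : \sum_j (\sum_i `|v 0 i| * A i j - `|v 0 j|) = 0.
  rewrite sumrB exchange_big /=; under eq_bigr do rewrite -mulr_sumr A_sum1 mulr1.
  exact: subrr.
move=> j; apply/eqP; rewrite -subr_eq0; apply/eqP.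
by apply: (psumr_eq0P _ gap0) => // k _; rewrite subr_ge0.
Qed.

Lemma stationary_exists (R : realFieldType) (T : finType) (K : T -> T -> R) (x0 : T) :
  (forall s t, 0 <= K s t) -> (forall s, \sum_t K s t = 1) ->
  exists pi : {ffun T -> R}, [/\ forall s, 0 <= pi s, \sum_s pi s = 1 &
      forall t, \sum_s pi s * K s t = pi t].
Proof.
move=> K_ge0 K_sum1.
have reindex_enum (F : T -> R) : \sum_t F t = \sum_(i < #|T|) F (enum_val i).
  by rewrite -big_enum_val; apply: eq_bigl => t; rewrite inE.
pose N := #|T|; pose A : 'M[R]_N := \matrix_(i, j) K (enum_val i) (enum_val j).
have A_ge0 i j : 0 <= A i j by rewrite mxE.
have A_sum1 i : \sum_j A i j = 1.
  by rewrite -(K_sum1 (enum_val i)) reindex_enum; apply: eq_bigr => j _; rewrite mxE.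
have N_gt0 : (0 < N)%N by apply/card_gt0P; exists x0.
have [v v_neq0 vA] := stochastic_fixed_row N_gt0 A_sum1.
have vA_norm := stochastic_fixed_row_norm A_ge0 A_sum1 vA.
pose w i := `|v 0 i|; pose mass := \sum_i w i.
have mass_gt0 : 0 < mass.
  have [j vj] : exists j, v 0 j != 0.
    apply/existsP; apply: contraR v_neq0 => /existsPn v0; apply/eqP/rowP => j.
    by rewrite mxE; apply/eqP/negbNE.
  by rewrite /mass /w (bigD1 j) //= ltr_wpDr ?sumr_ge0 // normr_gt0.
exists [ffun t => w (enum_rank t) / mass]; split.
- by move=> s; rewrite ffunE divr_ge0 ?normr_ge0 // ltW.
- under eq_bigr do rewrite ffunE.
  rewrite -mulr_suml reindex_enum; under eq_bigr do rewrite enum_valK.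
  by rewrite mulfV // lt0r_neq0.
- move=> t; rewrite ffunE; under eq_bigr do rewrite ffunE mulrAC.
  rewrite -mulr_suml reindex_enum /w -vA_norm; congr (_ / _); apply: eq_bigr => i _.
  by rewrite enum_valK mxE enum_rankK.
Qed.

Definition all_infected n : state n := [ffun => true].
Definition all_healthy n : state n := [ffun => false].

Definition num_healthy n (s : state n) : nat := (\sum_(x : 'I_n) (~~ s x : nat))%N.

Lemma flip_neq n x (s : state n) : flip x s != s.
Proof. by apply/eqP => /ffunP /(_ x); rewrite ffunE eqxx; case: (s x). Qed.

Lemma num_healthy_flip n x (s : state n) :
  num_healthy (flip x s) = if s x then (num_healthy s).+1 else (num_healthy s).-1.
Proof.
rewrite /num_healthy (bigD1 x) //= [in RHS](bigD1 x) //= ffunE eqxx.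
rewrite (eq_bigr (fun y => (~~ s y : nat))); last by move=> y /negbTE y_x; rewrite ffunE y_x.
by case: (s x).
Qed.

Lemma healthy_num_healthy_gt0 n x (s : state n) : ~~ s x -> (0 < num_healthy s)%N.
Proof. by move=> sx; rewrite /num_healthy (bigD1 x) //= sx. Qed.

Lemma num_healthy_le n (s : state n) : (num_healthy s <= n)%N.
Proof.
rewrite /num_healthy -[X in (_ <= X)%N]card_ord -sum1_card.
by apply: leq_sum => x _; case: (s x).
Qed.

Lemma num_healthy_all_infected n : num_healthy (all_infected n) = 0%N.
Proof. by rewrite /num_healthy big1 // => x _; rewrite ffunE. Qed.

Lemma num_healthy_all_healthy n : num_healthy (all_healthy n) = n.
Proof.
rewrite /num_healthy (eq_bigr (fun _ => 1%N)) ?sum1_card ?card_ord // => x _.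
by rewrite ffunE.
Qed.

Lemma num_healthy_gt0 n (s : state n) : s != all_infected n -> (0 < num_healthy s)%N.
Proof.
move=> s_neq; have [x sx] : exists x, ~~ s x.
  apply/existsP; apply: contraR s_neq => /existsPn s1; apply/eqP/ffunP => x.
  by rewrite ffunE; apply/negbNE.
exact: healthy_num_healthy_gt0 sx.
Qed.

Lemma sum_if_state (R : ringType) n (s : state n) (A B : R) :
  \sum_x (if s x then A else B) = n%:R * A + (num_healthy s)%:R * (B - A).
Proof.
rewrite (eq_bigr (fun x => A + (~~ s x : nat)%:R * (B - A))); last first.
  by move=> x _; case: (s x); rewrite /= ?mul0r ?mul1r ?addr0 // addrC subrK.
by rewrite big_split /= sumr_const card_ord -mulr_suml /num_healthy natr_sum mulr_natl.
Qed.

Section FlipKernel.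
Variables (R : realFieldType) (n : nat) (r : state n -> 'I_n -> R).

Definition flip_kernel (s t : state n) : R :=
  (n%:R)^-1 * \sum_(x : 'I_n)
    (if t == s then 1 - r s x else if t == flip x s then r s x else 0).

Lemma flip_kernel_expect s (f : state n -> R) : \sum_t flip_kernel s t * f t =
  (n%:R)^-1 * \sum_x ((1 - r s x) * f s + r s x * f (flip x s)).
Proof.
rewrite /flip_kernel; under eq_bigr do rewrite -mulrA mulr_suml.
rewrite -mulr_sumr exchange_big /=; congr (_ * _); apply: eq_bigr => x _.
rewrite (bigD1 s) //= eqxx (bigD1 (flip x s)) /=; last by rewrite flip_neq.
rewrite (negbTE (flip_neq x s)) eqxx big1 ?addr0 // => t /andP [/negbTE -> /negbTE ->].
by rewrite mul0r.
Qed.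

Hypothesis r_01 : forall s x, 0 <= r s x <= 1.

Lemma flip_kernel_ge0 s t : 0 <= flip_kernel s t.
Proof.
rewrite /flip_kernel mulr_ge0 ?invr_ge0 ?ler0n //; apply: sumr_ge0 => x _.
have /andP [r_ge0 r_le1] := r_01 s x.
by case: ifP => _; [rewrite subr_ge0 | case: ifP].
Qed.

Hypothesis n_gt0 : (0 < n)%N.

Lemma flip_kernel_sum1 s : \sum_t flip_kernel s t = 1.
Proof.
have := flip_kernel_expect s (fun _ => 1); under eq_bigr do rewrite mulr1; move=> ->.
under eq_bigr do rewrite !mulr1 subrK.
by rewrite sumr_const card_ord -mulr_natl mulr1 mulVf // pnatr_eq0 -lt0n.
Qed.

End FlipKernel.

Lemma exprSD_ge (R : realFieldType) (u e : R) j : 0 <= u -> 0 <= e ->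
  u ^+ j.+1 + j.+1%:R * u ^+ j * e <= (u + e) ^+ j.+1.
Proof.
move=> u_ge0 e_ge0; elim: j => [|j IH]; first by rewrite !expr1 expr0 mulr1 mul1r.
rewrite [(u + e) ^+ j.+2]exprS.
apply: le_trans (ler_wpM2l (addr_ge0 u_ge0 e_ge0) IH).
have uj_ge0 : 0 <= u ^+ j by rewrite exprn_ge0.
rewrite !exprS -!natr1 -!mulrA; set P := u ^+ j; rewrite -/P in uj_ge0.
have : 0 <= (j%:R + 1) * (P * e * e) by rewrite !mulr_ge0 ?addr_ge0 ?ler0n.
nra.
Qed.

Section HealthyDrift.
Variables (R : realFieldType) (n : nat) (r : state n -> 'I_n -> R) (kap c : R).
Hypothesis r_01 : forall s x, 0 <= r s x <= 1.
Hypothesis n_gt0 : (0 < n)%N.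
Hypothesis r_infected : forall (s : state n) x, s x -> r s x <= kap.
Hypothesis r_healthy : forall (s : state n) x, ~~ s x -> c <= r s x.
Hypothesis kap_ge0 : 0 <= kap.

Let K := flip_kernel r.
Let n_pos : 0 < n%:R :> R. Proof. by rewrite ltr0n. Qed.
Let inv_n_ge0 : 0 <= (n%:R : R)^-1. Proof. by rewrite invr_ge0 ltW. Qed.

Lemma expect_num_healthy_step s :
  \sum_t K s t * (num_healthy t)%:R <= (1 - c / n%:R) * (num_healthy s)%:R + kap.
Proof.
rewrite flip_kernel_expect; set W := (num_healthy s)%:R.
have step x : (1 - r s x) * W + r s x * (num_healthy (flip x s))%:R <=
    (if s x then W + kap else W - c).
  rewrite num_healthy_flip; case sx: (s x).
    by rewrite -addn1 natrD; have := r_infected sx; rewrite -/W; lra.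
  have W_gt0 := healthy_num_healthy_gt0 (negbT sx).
  by rewrite -subn1 natrB // -/W; have := r_healthy (negbT sx); lra.
apply: le_trans (ler_wpM2l inv_n_ge0 (ler_sum _ (fun x _ => step x))) _.
rewrite sum_if_state -/W.
have -> : (n%:R)^-1 * (n%:R * (W + kap) + W * (W - c - (W + kap))) =
    (1 - c / n%:R) * W + kap - kap * W / n%:R by field; rewrite lt0r_neq0.
have : 0 <= kap * W / n%:R by rewrite !mulr_ge0 ?ler0n.
lra.
Qed.

(* A healthy vertex can leave the healthy set only when it is picked: a coupon-collector bound. *)
Lemma expect_pow_num_healthy_step s (u : R) : 0 <= u <= 1 ->
  \sum_t K s t * u ^+ (num_healthy t) <= (u + (1 - u) / n%:R) ^+ (num_healthy s).
Proof.
move=> /andP [u_ge0 u_le1]; rewrite flip_kernel_expect.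
have step x : (1 - r s x) * u ^+ num_healthy s + r s x * u ^+ num_healthy (flip x s) <=
    (if s x then u ^+ num_healthy s else u ^+ (num_healthy s).-1).
  have /andP [r_ge0 r_le1] := r_01 s x.
  rewrite num_healthy_flip; case sx: (s x).
    rewrite exprS; set P := u ^+ num_healthy s.
    have : 0 <= r s x * P * (1 - u) by rewrite !mulr_ge0 ?exprn_ge0 // subr_ge0.
    lra.
  have := healthy_num_healthy_gt0 (negbT sx); case: (num_healthy s) => // j _ /=.
  rewrite exprS; set P := u ^+ j.
  have : 0 <= (1 - r s x) * P * (1 - u) by rewrite !mulr_ge0 ?exprn_ge0 // subr_ge0.
  lra.
apply: le_trans (ler_wpM2l inv_n_ge0 (ler_sum _ (fun x _ => step x))) _.
rewrite sum_if_state; case: (num_healthy s) => [|j].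
  by rewrite !expr0 mul0r addr0 mulr1 mulVf // lt0r_neq0.
apply: le_trans (exprSD_ge j u_ge0 (_ : 0 <= (1 - u) / n%:R)); last first.
  by rewrite mulr_ge0 ?subr_ge0.
rewrite /= exprS.
have -> : (n%:R)^-1 * (n%:R * (u * u ^+ j) + j.+1%:R * (u ^+ j - u * u ^+ j)) =
  u * u ^+ j + j.+1%:R * u ^+ j * ((1 - u) / n%:R) by field; rewrite lt0r_neq0.
done.
Qed.

Hypothesis c_gt0 : 0 < c.
Hypothesis c_le1 : c <= 1.

Let K_ge0 := flip_kernel_ge0 r_01.
Let K_sum1 := flip_kernel_sum1 r n_gt0.

Lemma expect_num_healthy_law s0 k : \sum_t law K s0 k t * (num_healthy t)%:R <=
  (1 - c / n%:R) ^+ k * n%:R + n%:R * kap / c.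
Proof.
have q_ge0 : 0 <= 1 - c / n%:R.
  by rewrite subr_ge0 ler_pdivrMr // mul1r (le_trans c_le1) // ler1n.
elim: k => [|k IH].
  rewrite law0_expect expr0 mul1r; have := num_healthy_le s0; rewrite -(ler_nat R).
  have : 0 <= n%:R * kap / c by rewrite !mulr_ge0 ?ler0n // invr_ge0 ltW.
  lra.
rewrite /= kernel_expect.
apply: le_trans (_ : \sum_s law K s0 k s *
    ((1 - c / n%:R) * (num_healthy s)%:R + kap) <= _).
  by apply: ler_sum => s _; rewrite ler_wpM2l ?law_ge0 // expect_num_healthy_step.
under eq_bigr do rewrite mulrDr mulrCA.
rewrite big_split /= -mulr_suml -mulr_sumr law_sum1 // mul1r.
have -> : (1 - c / n%:R) ^+ k.+1 * n%:R + n%:R * kap / c =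
    (1 - c / n%:R) * ((1 - c / n%:R) ^+ k * n%:R + n%:R * kap / c) + kap.
  by rewrite exprS; field; rewrite !lt0r_neq0.
by rewrite lerD2r ler_wpM2l.
Qed.

Lemma expect_num_healthy_stationary (pi : state n -> R) :
  (forall s, 0 <= pi s) -> \sum_s pi s = 1 -> (forall t, \sum_s pi s * K s t = pi t) ->
  \sum_t pi t * (num_healthy t)%:R <= n%:R * kap / c.
Proof.
move=> pi_ge0 pi_sum1 pi_inv; set E := \sum_t pi t * (num_healthy t)%:R.
have E_le : E <= (1 - c / n%:R) * E + kap.
  rewrite {1}/E (stationary_expect _ pi_inv).
  apply: le_trans (_ : \sum_s pi s * ((1 - c / n%:R) * (num_healthy s)%:R + kap) <= _).
    by apply: ler_sum => s _; rewrite ler_wpM2l // expect_num_healthy_step.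
  under eq_bigr do rewrite mulrDr mulrCA.
  by rewrite big_split /= -mulr_suml -mulr_sumr pi_sum1 mul1r.
rewrite ler_pdivlMr //.
have -> : E * c = n%:R * (c / n%:R * E) by field; rewrite lt0r_neq0.
by rewrite ler_wpM2l ?ler0n //; lra.
Qed.

(* [cover_prob m] is the probability that a given vertex is among [m] uniform picks. *)
Definition cover_prob (m : nat) : R := 1 - (1 - (n%:R)^-1) ^+ m.

Lemma cover_prob_01 m : 0 <= cover_prob m <= 1.
Proof.
have q_ge0 : 0 <= 1 - (n%:R : R)^-1 by rewrite subr_ge0 invf_le1 // ler1n.
have q_le1 : 1 - (n%:R : R)^-1 <= 1 by rewrite lerBlDr lerDl.
by rewrite /cover_prob subr_ge0 exprn_ile1 //= lerBlDr lerDl exprn_ge0.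
Qed.

Lemma cover_prob0 : cover_prob 0 = 0.
Proof. by rewrite /cover_prob expr0 subrr. Qed.

Lemma cover_probS m : cover_prob m.+1 = cover_prob m + (1 - cover_prob m) / n%:R.
Proof. by rewrite /cover_prob exprS; ring. Qed.

Lemma expect_pow_num_healthy_law s0 k m :
  \sum_t law K s0 k t * cover_prob m ^+ num_healthy t <= cover_prob (m + k) ^+ num_healthy s0.
Proof.
elim: k m => [|k IH] m; first by rewrite law0_expect addn0.
rewrite /= kernel_expect addnS -addSn.
apply: le_trans (IH m.+1); apply: ler_sum => s _.
by rewrite ler_wpM2l ?law_ge0 // cover_probS expect_pow_num_healthy_step ?cover_prob_01.
Qed.

End HealthyDrift.

Section TotalVariation.
Variables (R : realType) (n : nat).
Implicit Types (mu nu : state n -> R).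

Lemma sum_off_point mu z : \sum_t mu t = 1 -> \sum_(t | t != z) mu t = 1 - mu z.
Proof. by rewrite (bigD1 z) //= => mu_sum1; lra. Qed.

Lemma dTV_le_off_point mu nu z : (forall t, 0 <= mu t) -> \sum_t mu t = 1 ->
  (forall t, 0 <= nu t) -> \sum_t nu t = 1 -> dTV mu nu <= (1 - mu z) + (1 - nu z).
Proof.
move=> mu_ge0 mu_sum1 nu_ge0 nu_sum1; rewrite /dTV (bigD1 z) //=.
have off : \sum_(t | t != z) `|mu t - nu t| <= (1 - mu z) + (1 - nu z).
  rewrite -(sum_off_point z mu_sum1) -(sum_off_point z nu_sum1) -big_split /=.
  by apply: ler_sum => t _; apply: le_trans (ler_normB _ _) _; rewrite !ger0_norm.
have mu_le1 : mu z <= 1 by rewrite -mu_sum1 (bigD1 z) //= lerDl sumr_ge0.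
have nu_le1 : nu z <= 1 by rewrite -nu_sum1 (bigD1 z) //= lerDl sumr_ge0.
have at_z : `|mu z - nu z| <= (1 - mu z) + (1 - nu z).
  by rewrite ler_norml; have := mu_ge0 z; have := nu_ge0 z; lra.
lra.
Qed.

Lemma dTV_ge_point mu nu z : \sum_t mu t = 1 -> \sum_t nu t = 1 ->
  nu z - mu z <= dTV mu nu.
Proof.
move=> mu_sum1 nu_sum1; rewrite /dTV (bigD1 z) //=.
have off : nu z - mu z <= \sum_(t | t != z) `|mu t - nu t|.
  have -> : nu z - mu z = \sum_(t | t != z) (mu t - nu t).
    by rewrite sumrB (sum_off_point z mu_sum1) (sum_off_point z nu_sum1); lra.
  by apply: ler_sum => t _; apply: ler_norm.
have := ler_norm (nu z - mu z); rewrite distrC; lra.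
Qed.

Lemma mass_all_infected_ge mu : (forall t, 0 <= mu t) -> \sum_t mu t = 1 ->
  1 - \sum_t mu t * (num_healthy t)%:R <= mu (all_infected n).
Proof.
move=> mu_ge0 mu_sum1; rewrite lerBlDr addrC -lerBlDr -(sum_off_point _ mu_sum1).
rewrite [X in _ <= X](bigD1 (all_infected n)) //= num_healthy_all_infected mulr0 add0r.
apply: ler_sum => t t_neq; rewrite -[X in X <= _]mulr1 ler_wpM2l //.
by rewrite ler1n num_healthy_gt0.
Qed.

Lemma mass_all_infected_le mu : (forall t, 0 <= mu t) ->
  mu (all_infected n) <= \sum_t mu t * 0 ^+ (num_healthy t).
Proof.
move=> mu_ge0; rewrite (bigD1 (all_infected n)) //= num_healthy_all_infected expr0 mulr1.
by rewrite lerDl sumr_ge0 // => t _; rewrite mulr_ge0 ?exprn_ge0.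
Qed.

End TotalVariation.

Lemma tmix_le (R : realType) d n (m : config d n) (a lam kap eps : R) k :
  dmax m a lam kap k <= eps -> tmix m a lam kap eps <= k%:R.
Proof.
move=> dk; apply: ge_inf; last by exists k.
by exists 0 => x [j _ <-]; rewrite ler0n.
Qed.

Lemma tmix_ge (R : realType) d n (m : config d n) (a lam kap eps T : R) k0 :
  dmax m a lam kap k0 <= eps -> (forall k, k%:R < T -> eps < dmax m a lam kap k) ->
  T <= tmix m a lam kap eps.
Proof.
move=> dk0 before_T; apply: lb_le_inf; first by exists k0%:R, k0.
move=> x [k dk <-]; rewrite leNgt; apply/negP => /before_T.
by rewrite ltNge dk.
Qed.

Lemma nI_le d n (m : config d n) s x : (0 < d)%N -> (nI m s x <= d)%N.
Proof.
move=> d_gt0; rewrite /nI; set A := [set h | _].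
pose slot (h : 'I_(d * n)) : 'I_d := Ordinal (ltn_pmod h d_gt0).
have slot_inj : {in A &, injective slot}.
  move=> h1 h2; rewrite !inE => /andP [/eqP e1 _] /andP [/eqP e2 _] /(congr1 val) /= e.
  by apply/val_inj; rewrite /= (divn_eq h1 d) (divn_eq h2 d) e1 e2 e.
by rewrite -(card_in_imset slot_inj) (leq_trans (max_card _)) ?card_ord.
Qed.

(* Pair half-edge [2i] with [2i + 1]. *)
Lemma pairing_exists d n : ~~ odd (d * n) -> exists m : config d n, is_pairing m.
Proof.
move=> even_dn; pose f (h : 'I_(d * n)) := insubd h (if odd h then h.-1 else h.+1).
have fE h : val (f h) = if odd h then h.-1 else h.+1.
  rewrite val_insubd; case odd_h: (odd h); first by rewrite (leq_ltn_trans (leq_pred h)).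
  have := ltn_ord h; rewrite leq_eqVlt => /orP [/eqP hS|-> //].
  by rewrite -hS /= odd_h in even_dn.
exists [ffun h => f h]; apply/forallP => h; rewrite !ffunE; apply/andP; split.
  apply/eqP/val_inj; rewrite !fE; case: h => [[|k] hk] //=.
  by case odd_k: (odd k); rewrite /= ?odd_k.
apply/eqP => /(congr1 val); rewrite fE; case: h => [[|k] hk] //=.
by case: (odd k) => /= /eqP; rewrite ?eqn_leq ?ltnn ?andbF.
Qed.

Lemma Pcfg_all (R : realType) d n (E : pred (config d n)) :
  ~~ odd (d * n) -> (forall m, E m) -> @Pcfg R d n E = 1.
Proof.
move=> even_dn E_all; rewrite /Pcfg.
have -> : [set m | is_pairing m && E m] = [set m | is_pairing m].
  by apply/setP => m; rewrite !inE E_all andbT.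
apply: mulfV; rewrite pnatr_eq0 -lt0n card_gt0.
have [m m_pairing] := pairing_exists even_dn.
by apply/set0Pn; exists m; rewrite inE.
Qed.

Section Estimates.
Variable R : realType.

Lemma expRN_le_inv (y : R) : -1 < y -> expR (- y) <= (1 + y)^-1.
Proof.
move=> y_gt; rewrite expRN lef_pV2 ?posrE ?expR_gt0 ?expR_ge1Dx //.
by rewrite -ltrBlDl sub0r.
Qed.

Lemma expr_le_expR (x : R) k : 0 <= 1 - x -> (1 - x) ^+ k <= expR (- x * k%:R).
Proof.
move=> x_le1; rewrite expRM_natr; apply: lerXn2r; rewrite ?nnegrE ?expR_ge0 //.
by have := expR_ge1Dx (- x); lra.
Qed.

Lemma geometric_decay_le (N c : R) k : 1 <= N -> 0 < ln N -> 3 / 4 <= c <= 1 ->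
  2 * N * ln N - 1 <= k%:R -> (1 - c / N) ^+ k * N <= 2 / ln N.
Proof.
set L := ln N => N_ge1 L_gt0 /andP [c_ge c_le1] k_ge.
have N_gt0 : 0 < N by lra.
have cN_ge0 : 0 <= c / N by rewrite divr_ge0 //; lra.
have cN_le1 : c / N <= 1 by rewrite ler_pdivrMr // mul1r; lra.
apply: le_trans (ler_wpM2r (ltW N_gt0) (expr_le_expR k _)) _; first by lra.
rewrite -[X in _ * X](lnK (_ : N \in Num.pos)) ?posrE // -expRD -/L.
have exponent_le : - (c / N) * k%:R + L <= - (L / 2 - 1).
  have : c / N * (2 * N * L - 1) <= c / N * k%:R by rewrite ler_wpM2l.
  have -> : c / N * (2 * N * L - 1) = 2 * c * L - c / N by field; rewrite lt0r_neq0.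
  have : 3 / 4 * L <= c * L by rewrite ler_wpM2r // ltW.
  lra.
apply: (le_trans (_ : _ <= expR (- (L / 2 - 1)))); first by rewrite ler_expR.
apply: le_trans (expRN_le_inv _) _; first by lra.
by rewrite (_ : 1 + (L / 2 - 1) = (2 / L)^-1) ?invrK //; field; rewrite lt0r_neq0.
Qed.

Lemma cover_prob_pow_le n k : (3 <= n)%N -> 0 < ln (n%:R : R) ->
  k%:R < n%:R / 2 * ln (n%:R : R) -> cover_prob R n k ^+ n <= 4 / ln n%:R.
Proof.
set N : R := n%:R; set L := ln N => n_ge3 L_gt0 k_lt.
have N_ge3 : 3 <= N by rewrite (ler_nat R 3).
set q := 1 - N^-1.
have q_ge0 : 0 <= q by rewrite subr_ge0 invf_le1; lra.
have qk_ge0 : 0 <= q ^+ k by rewrite exprn_ge0.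
have q_ge : expR (- (N - 1)^-1) <= q.
  have inv_gt0 : 0 < (N - 1)^-1 by rewrite invr_gt0; lra.
  apply: le_trans (expRN_le_inv _) _; first by lra.
  rewrite (_ : (1 + (N - 1)^-1)^-1 = q) // /q.
  by field; apply/andP; split; rewrite lt0r_neq0 //; lra.
have qk_ge : expR (- (N - 1)^-1 * k%:R) <= q ^+ k.
  by rewrite expRM_natr lerXn2r ?nnegrE ?expR_ge0.
have k_le : k%:R * (N - 1)^-1 <= 3 / 4 * L.
  rewrite ler_pdivrMr; last by lra.
  have : N / 2 * L <= 3 / 4 * (N - 1) * L by rewrite ler_wpM2r //; lra.
  lra.
have qkN_ge : expR (L / 4) <= q ^+ k * N.
  apply: le_trans (ler_wpM2r (_ : 0 <= N) qk_ge); last by lra.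
  rewrite -[X in _ <= _ * X](lnK (_ : N \in Num.pos)) ?posrE -?expRD -/L ?ler_expR; lra.
have L4_le := expR_ge1Dx (L / 4).
rewrite /cover_prob -/N -/q.
have qk_le1 : q ^+ k <= 1 by rewrite exprn_ile1 // /q lerBlDr lerDl invr_ge0; lra.
apply: le_trans (expr_le_expR n _) _; first by lra.
rewrite -/N mulNr.
apply: le_trans (expRN_le_inv _) _; first by have := expR_gt0 (L / 4); lra.
rewrite -invf_div lef_pV2 ?posrE; lra.
Qed.

Lemma small_recovery_le_inv_ln (N kap c : R) : 3 <= N -> 0 < ln N -> 0 < kap ->
  kap < (4 * (N - 1) ^+ 2)^-1 -> 3 / 4 <= c -> N * kap / c <= (ln N)^-1.
Proof.
set L := ln N => N_ge3 L_gt0 kap_gt0 kap_lt c_ge.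
have L_le : L <= N - 1 by have := @le_ln1Dx R (N - 1); rewrite [1 + _]addrC subrK; apply; lra.
have kap_sq : kap * (4 * (N - 1) ^+ 2) < 1.
  by rewrite -ltr_pdivlMr ?mul1r // expr2; nra.
have NkapL_le : N * kap * L <= c.
  have : 0 <= N * kap by rewrite mulr_ge0 //; lra.
  rewrite expr2 in kap_sq; nra.
rewrite ler_pdivrMr; last by lra.
by rewrite [_ * c]mulrC ler_pdivlMr.
Qed.
End Estimates.

Section NoisySIS.
Variables (R : realType) (d n : nat) (m : config d n) (a lam kap : R).
Hypothesis d_gt0 : (0 < d)%N.
Hypothesis n_gt0 : (0 < n)%N.
Hypothesis kap_gt0 : 0 < kap.
Hypothesis kap_le : kap <= 4^-1.
Hypothesis a_ge : 1 - kap <= a.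
Hypothesis lam_ge0 : 0 <= lam.
Hypothesis a_lam_le1 : a + lam * d%:R <= 1.

Definition sis_rate (s : state n) (x : 'I_n) : R :=
  if s x then kap else a + lam * (nI m s x)%:R.

Let infection_ge s x : 0 <= lam * (nI m s x)%:R.
Proof. by rewrite mulr_ge0. Qed.

Lemma sis_rate_01 s x : 0 <= sis_rate s x <= 1.
Proof.
have infection_le : lam * (nI m s x)%:R <= lam * d%:R by rewrite ler_wpM2l // ler_nat nI_le.
move: kap_gt0 kap_le a_ge a_lam_le1 (infection_ge s x) infection_le; rewrite /sis_rate.
by case: (s x) => *; apply/andP; split; lra.
Qed.

Lemma sis_rate_infected (s : state n) x : s x -> sis_rate s x <= kap.
Proof. by rewrite /sis_rate => ->. Qed.

Lemma sis_rate_healthy (s : state n) x : ~~ s x -> 1 - kap <= sis_rate s x.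
Proof. by rewrite /sis_rate => /negbTE ->; have := infection_ge s x; move: a_ge; lra. Qed.

Let K := flip_kernel sis_rate.
Let K_ge0 := flip_kernel_ge0 sis_rate_01.
Let K_sum1 := flip_kernel_sum1 sis_rate n_gt0.

Lemma sis_lawE s0 k : sis_law m a lam kap s0 k = law K s0 k.
Proof. by elim: k => //= k ->. Qed.

Lemma statdist_stationary : is_stationary m a lam kap (statdist m a lam kap).
Proof.
apply: xgetPex.
have [pi [pi_ge0 pi_sum1 pi_inv]] := stationary_exists (all_infected n) K_ge0 K_sum1.
by exists pi; split.
Qed.

Let c_gt0 : 0 < 1 - kap. Proof. by move: kap_le; lra. Qed.
Let c_le1 : 1 - kap <= 1. Proof. by move: kap_gt0; lra. Qed.

Lemma sis_law_ge0 s0 k t : 0 <= sis_law m a lam kap s0 k t.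
Proof. by rewrite sis_lawE law_ge0. Qed.

Lemma sis_law_sum1 s0 k : \sum_t sis_law m a lam kap s0 k t = 1.
Proof. by under eq_bigr do rewrite sis_lawE; rewrite law_sum1. Qed.

Lemma statdist_all_infected_ge :
  1 - n%:R * kap / (1 - kap) <= statdist m a lam kap (all_infected n).
Proof.
have [pi_ge0 pi_sum1 pi_inv] := statdist_stationary.
apply: le_trans (mass_all_infected_ge pi_ge0 pi_sum1); rewrite lerD2l lerN2.
exact: (expect_num_healthy_stationary n_gt0 sis_rate_infected sis_rate_healthy
  (ltW kap_gt0) c_gt0 pi_ge0 pi_sum1 pi_inv).
Qed.

Lemma sis_law_all_infected_ge s0 k :
  1 - ((1 - (1 - kap) / n%:R) ^+ k * n%:R + n%:R * kap / (1 - kap)) <=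
  sis_law m a lam kap s0 k (all_infected n).
Proof.
apply: le_trans (mass_all_infected_ge (sis_law_ge0 s0 k) (sis_law_sum1 s0 k)).
under eq_bigr do rewrite sis_lawE; rewrite lerD2l lerN2.
exact: expect_num_healthy_law sis_rate_01 n_gt0 sis_rate_infected sis_rate_healthy
  (ltW kap_gt0) c_gt0 c_le1 s0 k.
Qed.

Lemma sis_law_all_infected_le k :
  sis_law m a lam kap (all_healthy n) k (all_infected n) <= cover_prob R n k ^+ n.
Proof.
apply: le_trans (mass_all_infected_le (sis_law_ge0 (all_healthy n) k)) _.
under eq_bigr do rewrite sis_lawE.
have := expect_pow_num_healthy_law sis_rate_01 n_gt0 (all_healthy n) k 0.
by rewrite add0n num_healthy_all_healthy cover_prob0.
Qed.

Lemma dmax_le k : dmax m a lam kap k <=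
  (1 - (1 - kap) / n%:R) ^+ k * n%:R + 2 * (n%:R * kap / (1 - kap)).
Proof.
rewrite /dmax; apply: bigmax_le => [|s0 _].
  have q_ge0 : 0 <= 1 - (1 - kap) / n%:R.
    by rewrite subr_ge0 ler_pdivrMr ?ltr0n // mul1r (le_trans c_le1) ?ler1n.
  by rewrite addr_ge0 ?mulr_ge0 ?exprn_ge0 ?ler0n ?invr_ge0 ?(ltW kap_gt0) ?(ltW c_gt0).
have [pi_ge0 pi_sum1 _] := statdist_stationary.
apply: le_trans (dTV_le_off_point (all_infected n) (sis_law_ge0 s0 k) (sis_law_sum1 s0 k)
  pi_ge0 pi_sum1) _.
by have := sis_law_all_infected_ge s0 k; have := statdist_all_infected_ge; lra.
Qed.

Lemma dmax_ge k : 1 - n%:R * kap / (1 - kap) - cover_prob R n k ^+ n <= dmax m a lam kap k.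
Proof.
apply: le_trans (le_bigmax _ _ (all_healthy n)).
have [_ pi_sum1 _] := statdist_stationary.
apply: le_trans (dTV_ge_point (all_infected n) (sis_law_sum1 _ k) pi_sum1).
by have := sis_law_all_infected_le k; have := statdist_all_infected_ge; lra.
Qed.

End NoisySIS.

Lemma sis_tmix_bounds (R : realType) d n (m : config d n) (a lam kap eps : R) :
  (0 < d)%N -> (3 <= n)%N -> 0 < kap -> kap < (4 * (n.-1)%:R ^+ 2)^-1 ->
  1 - kap <= a -> 0 <= lam -> a + lam * d%:R <= 1 -> 0 < eps < 1 ->
  8 / eps + 8 / (1 - eps) <= ln (n%:R : R) ->
  n%:R / 2 * ln n%:R <= tmix m a lam kap eps <= 2 * n%:R * ln n%:R.
Proof.
set N : R := n%:R; set L := ln N.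
move=> d_gt0 n_ge3 kap_gt0 kap_lt a_ge lam_ge0 a_lam_le1 /andP [eps_gt0 eps_lt1] L_ge.
have n_gt0 : (0 < n)%N by apply: leq_trans n_ge3.
have N_ge3 : 3 <= N by rewrite (ler_nat R 3).
have eps8_gt0 : 0 < 8 / eps by rewrite divr_gt0.
have eps8'_gt0 : 0 < 8 / (1 - eps) by rewrite divr_gt0 // subr_gt0.
have L_gt0 : 0 < L by lra.
(* Every error term below is a small multiple of [1 / L]. *)
have inv_L_le (x : R) : 0 < x -> 8 / x <= L -> L^-1 <= x / 8.
  by move=> x_gt0 le_L; rewrite -invf_div lef_pV2 ?posrE ?divr_gt0.
have inv_L_eps : L^-1 <= eps / 8 by apply: inv_L_le => //; lra.
have inv_L_eps' : L^-1 <= (1 - eps) / 8 by apply: inv_L_le; lra.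
rewrite -subn1 natrB // -/N in kap_lt.
have kap_le : kap <= 4^-1.
  by rewrite (le_trans (ltW kap_lt)) // lef_pV2 ?posrE ?ler_peMr ?expr2 //; nra.
have c_ge : 3 / 4 <= 1 - kap by lra.
have stationary_small := small_recovery_le_inv_ln N_ge3 L_gt0 kap_gt0 kap_lt c_ge.
rewrite -/L in stationary_small.
have [k0 /andP [k0_le k0_gt]] : exists k0 : nat, k0%:R <= 2 * N * L < k0.+1%:R.
  by exists (Num.trunc (2 * N * L)); apply: trunc_itv; rewrite !mulr_ge0 // ltW.
have dmax_k0 : dmax m a lam kap k0 <= eps.
  apply: le_trans (dmax_le m d_gt0 n_gt0 kap_gt0 kap_le a_ge lam_ge0 a_lam_le1 k0) _.
  have c_range : 3 / 4 <= 1 - kap <= 1 by apply/andP; split; lra.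
  have k0_ge : 2 * N * L - 1 <= k0%:R by rewrite -natr1 in k0_gt; lra.
  have N_ge1 : 1 <= N by lra.
  have := geometric_decay_le N_ge1 L_gt0 c_range k0_ge.
  rewrite -/N -/L; lra.
rewrite (le_trans (tmix_le dmax_k0) k0_le) andbT.
apply: (tmix_ge dmax_k0) => k k_lt.
apply: lt_le_trans (dmax_ge m d_gt0 n_gt0 kap_gt0 kap_le a_ge lam_ge0 a_lam_le1 k).
have := cover_prob_pow_le n_ge3 L_gt0 k_lt; rewrite -/N -/L; lra.
Qed.

Local Open Scope classical_set_scope.

Theorem mainTheorem7 (R : realType) (d : nat) (a lam kap : nat -> R) (alpha : R) :
  (0 < d)%N -> 1 < alpha ->
  (forall n : nat, (1 < n)%N ->
     [/\ 0 < kap n, kap n < (4 * (n.-1)%:R ^+ 2)^-1,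
         1 - ((n%:R) `^ alpha)^-1 < a n,
         1 - kap n < 1 - ((n%:R) `^ alpha)^-1 & 2^-1 < 1 - kap n]
     /\ [/\ 0 < lam n, lam n <= (d%:R * (n%:R) `^ alpha)^-1
          & a n + lam n * d%:R <= 1]) ->
  forall eps : R, 0 < eps < 1 ->
  exists delta : nat -> R,
    delta n @[n --> \oo] --> (0 : R^o) /\
    forall eps' : R, 0 < eps' ->
      \forall n \near \oo, ~~ odd (d * n) ->
        1 - eps' <= @Pcfg R d n
          [pred m : config d n |
             (n%:R / 2 * ln n%:R * (1 - delta n) <= tmix m (a n) (lam n) (kap n) eps)
             && (tmix m (a n) (lam n) (kap n) eps <= 2 * n%:R * ln n%:R * (1 + delta n))].
Proof.
move=> d_gt0 _ params eps eps_range.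
exists (fun=> 0); split; first exact: (@cvg_cst R^o).
move=> eps' eps'_gt0; near=> n => even_dn.
have n_ge3 : (3 <= n)%N by near: n; exact: nbhs_infty_ge.
have n_gt1 : (1 < n)%N by apply: leq_trans n_ge3.
have [[kap_gt0 kap_lt a_gt kap_lt' _] [lam_gt0 _ a_lam_le1]] := params n n_gt1.
rewrite Pcfg_all //; first by lra.
move=> m /=; rewrite subr0 addr0 !mulr1.
apply: sis_tmix_bounds => //; try lra.
have n_gt0 : 0 < n%:R :> R by rewrite ltr0n (leq_trans _ n_ge3).
rewrite -[X in X <= _]expRK ler_ln ?posrE ?expR_gt0 //.
by near: n; exact: nbhs_infty_ger.
Unshelve. all: by end_near.
Qed.
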